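(* Let $\sigma=(\beta_l,\beta_h)$ be an arbitrary strategy, $\{\mathcal{I}_N\}$ an arbitrary sequence of instances of the binary voting game, and $\Sigma_N$ the symmetric profile in $\mathcal{I}_N$ in which every agent plays $\sigma$. Let $f=\min(f_H,f_L)$ where $f_H=P_{hH}\beta_h+P_{lH}\beta_l-\mu$ and $f_L=P_{hL}(1-\beta_h)+P_{lL}(1-\beta_l)-(1-\mu)$ (the excess expected vote share of $\Sigma_N$, which does not depend on $N$). If $f>0$ then $\lim_{N\to\infty}A(\Sigma_N)=1$; if $f\le0$ then $A(\Sigma_N)$ does not converge to $1$.
   Context: Binary voting game. An instance has $N$ agents each voting for $\mathbf{A}$ or $\mathbf{R}$. Unobserved world state $W\in\{L,H\}$ with common prior $P_L,P_H>0$. Conditional on $W$, each agent independently receives a signal $S_n\in\{l,h\}$ with $P_{sw}=\Pr[S_n=s\mid W=w]$, $P_{hH}>P_{hL}$, $P_{lH}<P_{lL}$. With threshold $\mu\in(0,1)$, $\mathbf{A}$ wins iff at least $\mu N$ agents vote $\mathbf{A}$, else $\mathbf{R}$ wins. Agents have utilities $v_n:\{L,H\}\times\{\mathbf{A},\mathbf{R}\}\to\{0,\dots,B\}$ with $v_n(H,\mathbf{A})>v_n(L,\mathbf{A})$, $v_n(H,\mathbf{R})<v_n(L,\mathbf{R})$, and are friendly, unfriendly or contingent in fixed proportions $\alpha_F<\mu$, $\alpha_U<1-\mu$, $\alpha_C$ (counts $\lfloor\alpha_FN\rfloor,\lfloor\alpha_UN\rfloor$, rest), so the informed majority decision is $\mathbf{A}$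 in $H$ and $\mathbf{R}$ in $L$. A sequence of instances: $\mathcal{I}_N$ has $N$ agents, all share $\mu$, prior, signal distribution and $\alpha$'s. Strategy $\sigma=(\beta_l,\beta_h)$, $\beta_s$ = probability of voting $\mathbf{A}$ on signal $s$. Fidelity $A(\Sigma)=P_L\lambda^{\mathbf{R}}_L(\Sigma)+P_H\lambda^{\mathbf{A}}_H(\Sigma)$, with $\lambda^{\mathbf{X}}_w(\Sigma)$ the ex-ante probability that $\mathbf{X}$ wins in state $w$. *)

From HB Require Import structures.
From mathcomp Require Import all_boot all_order all_algebra.
From mathcomp Require Import all_classical all_reals all_analysis.
Set Implicit Arguments. Unset Strict Implicit. Unset Printing Implicit Defensive.
Import Order.TTheory GRing.Theory Num.Theory.
Local Open Scope ring_scope.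

(* Encoding: world state W : bool with true = H, false = L;
   signal S : bool with true = h, false = l;
   vote : bool with true = A, false = R. *)

Section Voting.
Variable R : realType.

(* Signal distribution: P_hw given for w = H (pH) and w = L (pL);
   P_lw := 1 - P_hw. *)
Definition Psig (pH pL : R) (w s : bool) : R :=
  let ph := if w then pH else pL in if s then ph else 1 - ph.

(* A strategy sigma = (beta_l, beta_h): probability of voting A on signal s. *)
Definition Pvote (sigma : R * R) (s v : bool) : R :=
  let b := if s then sigma.2 else sigma.1 in if v then b else 1 - b.

Definition A_wins (mu : R) (N : nat) (v : {ffun 'I_N -> bool}) : bool :=
  mu * N%:R <= (#|[set n | v n]|)%:R.

Definition lambdaA (pH pL mu : R) (N : nat) (Sig : 'I_N -> R * R) (w : bool) : R :=
  \sum_(s : {ffun 'I_N -> bool}) \sum_(v : {ffun 'I_N -> bool} | A_wins mu v)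
     \prod_(n < N) (Psig pH pL w (s n) * Pvote (Sig n) (s n) (v n)).

Definition lambdaR (pH pL mu : R) (N : nat) (Sig : 'I_N -> R * R) (w : bool) : R :=
  \sum_(s : {ffun 'I_N -> bool}) \sum_(v : {ffun 'I_N -> bool} | ~~ A_wins mu v)
     \prod_(n < N) (Psig pH pL w (s n) * Pvote (Sig n) (s n) (v n)).

(* Fidelity A(Sigma) = P_L lambda^R_L + P_H lambda^A_H, with prior P_H = prH,
   P_L = 1 - prH. *)
Definition fidelity (prH pH pL mu : R) (N : nat) (Sig : 'I_N -> R * R) : R :=
  (1 - prH) * lambdaR pH pL mu Sig false + prH * lambdaA pH pL mu Sig true.

Definition sym_profile (N : nat) (sigma : R * R) : 'I_N -> R * R := fun _ => sigma.

Definition fH (pH mu : R) (sigma : R * R) : R :=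
  pH * sigma.2 + (1 - pH) * sigma.1 - mu.
Definition fL (pL mu : R) (sigma : R * R) : R :=
  pL * (1 - sigma.2) + (1 - pL) * (1 - sigma.1) - (1 - mu).

End Voting.

From HB Require Import structures.
From mathcomp Require Import all_boot all_order all_algebra.
From mathcomp Require Import all_classical all_reals all_analysis.
From mathcomp Require Import ring lra.
Import Order.TTheory GRing.Theory Num.Theory.
Import numFieldNormedType.Exports.
Local Open Scope ring_scope.
Set Implicit Arguments. Unset Strict Implicit. Unset Printing Implicit Defensive.

(* Under the symmetric profile, in state w each agent votes A independently with
   probability q_w = P_hw beta_h + P_lw beta_l, so the number of A votes is
   binomial(N, q_w), and f_H = q_H - mu, f_L = mu - q_L.  If f > 0, Chebyshev's
   inequality makes the wrong outcome in each state vanish.  If f <= 0, say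
   q_H <= mu, then A loses in state H with probability bounded away from 0: for
   q_H < mu by Chebyshev again, and for q_H = mu by an anti-concentration bound.
   For the centred count Y with S = E Y^2 = N q (1 - q) >= 1 one has E Y = 0 and
   E Y^4 <= 4 S^2, and taking expectations in the pointwise inequality
   s^2 y^2 - y^4/8 - 2 s^3 y <= 7 s^4 [y < 0]  (s^2 = S)  gives P(Y < 0) >= 1/14;
   applied to -Y it gives P(Y >= 0) >= 1/14 as well. *)

Definition cons_ffun (T : Type) N (x : T) (v : {ffun 'I_N -> T}) : {ffun 'I_N.+1 -> T} :=
  [ffun i => if unlift ord0 i is Some j then v j else x].

Lemma cons_ffun0 T N x v : @cons_ffun T N x v ord0 = x.
Proof. by rewrite ffunE unlift_none. Qed.

Lemma cons_ffunS T N x v (j : 'I_N) : @cons_ffun T N x v (lift ord0 j) = v j.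
Proof. by rewrite ffunE liftK. Qed.

Lemma big_ffun_cons (R : Type) (idx : R) (op : Monoid.com_law idx) (T : finType) N
    (G : {ffun 'I_N.+1 -> T} -> R) :
  \big[op/idx]_w G w = \big[op/idx]_(x : T) \big[op/idx]_v G (cons_ffun x v).
Proof.
rewrite pair_big /= (reindex (fun p => cons_ffun p.1 p.2)) //.
exists (fun w : {ffun 'I_N.+1 -> T} => (w ord0, [ffun j => w (lift ord0 j)])).
  move=> [x v] _ /=; rewrite cons_ffun0; congr pair.
  by apply/ffunP => j; rewrite ffunE cons_ffunS.
move=> w _ /=; apply/ffunP => i; rewrite ffunE.
by case: unliftP => [j ->|->]; rewrite ?ffunE.
Qed.

Section BernoulliProduct.
Variables (R : realFieldType) (q : R).

Definition bern (b : bool) : R := if b then q else 1 - q.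

Definition bexpect N (F : {ffun 'I_N -> bool} -> R) : R :=
  \sum_(v : {ffun 'I_N -> bool}) (\prod_(n < N) bern (v n)) * F v.

Definition bprob N (E : pred {ffun 'I_N -> bool}) : R := bexpect (fun v => (E v)%:R).

Lemma eq_bexpect N (F G : {ffun 'I_N -> bool} -> R) : F =1 G -> bexpect F = bexpect G.
Proof. by move=> FG; apply: eq_bigr => v _; rewrite FG. Qed.

Lemma bexpect_ord0 (F : {ffun 'I_0 -> bool} -> R) : bexpect F = F [ffun=> false].
Proof.
rewrite /bexpect (big_pred1 [ffun=> false]) ?big_ord0 ?mul1r //.
by move=> v /=; apply/esym/eqP/ffunP => -[].
Qed.

Lemma bexpect_cons N (F : {ffun 'I_N.+1 -> bool} -> R) :
  bexpect F = q * bexpect (fun v => F (cons_ffun true v))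
            + (1 - q) * bexpect (fun v => F (cons_ffun false v)).
Proof.
rewrite /bexpect big_ffun_cons big_bool /= !mulr_sumr.
congr (_ + _); apply: eq_bigr => v _; rewrite big_ord_recl cons_ffun0 /=;
  under eq_bigr do rewrite cons_ffunS; by rewrite mulrA.
Qed.

Lemma bexpectD N (F G : {ffun 'I_N -> bool} -> R) :
  bexpect (fun v => F v + G v) = bexpect F + bexpect G.
Proof. by rewrite -big_split; apply: eq_bigr => v _; rewrite mulrDr. Qed.

Lemma bexpectZ N a (F : {ffun 'I_N -> bool} -> R) :
  bexpect (fun v => a * F v) = a * bexpect F.
Proof. by rewrite mulr_sumr; apply: eq_bigr => v _; rewrite mulrCA. Qed.

Lemma bexpectN N (F : {ffun 'I_N -> bool} -> R) : bexpect (fun v => - F v) = - bexpect F.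
Proof. by rewrite -mulN1r -bexpectZ; apply: eq_bexpect => v; rewrite mulN1r. Qed.

Lemma bexpect_sum N I (r : seq I) (F : I -> {ffun 'I_N -> bool} -> R) :
  bexpect (fun v => \sum_(i <- r) F i v) = \sum_(i <- r) bexpect (F i).
Proof.
rewrite exchange_big; apply: eq_bigr => v _; exact: mulr_sumr.
Qed.

Lemma bexpect1 N : bexpect (fun _ : {ffun 'I_N -> bool} => 1) = 1.
Proof.
elim: N => [|N IH]; first by rewrite bexpect_ord0.
by rewrite bexpect_cons IH; ring.
Qed.

Lemma bexpect_exprDn N (F : {ffun 'I_N -> bool} -> R) d k :
  bexpect (fun v => (F v + d) ^+ k)
  = \sum_(i < k.+1) 'C(k, i)%:R * d ^+ (k - i) * bexpect (fun v => F v ^+ i).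
Proof.
under eq_bexpect do rewrite addrC exprDn.
rewrite bexpect_sum; apply: eq_bigr => i _; rewrite -bexpectZ.
apply: eq_bexpect => v; rewrite -mulr_natl; ring.
Qed.

Definition ccount N (v : {ffun 'I_N -> bool}) : R := #|[set n | v n]|%:R - N%:R * q.

Lemma card_cons_ffun N b (v : {ffun 'I_N -> bool}) :
  #|[set n | cons_ffun b v n]| = (b + #|[set n | v n]|)%N.
Proof.
rewrite -!sum1_card !big_mkcond big_ord_recl /= inE cons_ffun0.
congr addn; under eq_bigr do rewrite inE cons_ffunS.
by rewrite [RHS]big_mkcond; apply: eq_bigr => n _; rewrite inE.
Qed.

Lemma ccount_cons N b (v : {ffun 'I_N -> bool}) :
  ccount (cons_ffun b v) = ccount v + (b%:R - q).
Proof. by rewrite /ccount card_cons_ffun natrD -natr1; ring. Qed.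

Lemma bexpect_ccount_cons N k :
  bexpect (fun v : {ffun 'I_N.+1 -> bool} => ccount v ^+ k)
  = q * bexpect (fun v : {ffun 'I_N -> bool} => (ccount v + (1 - q)) ^+ k)
    + (1 - q) * bexpect (fun v : {ffun 'I_N -> bool} => (ccount v + - q) ^+ k).
Proof.
by rewrite bexpect_cons; congr (_ * _ + _ * _); apply: eq_bexpect => v;
  rewrite ccount_cons /= ?add0r.
Qed.

Notation moment N k := (bexpect (fun v : {ffun 'I_N -> bool} => ccount v ^+ k)).

Lemma ccount_moments N (c := q * (1 - q)) :
  [/\ moment N 0 = 1, moment N 1 = 0, moment N 2 = N%:R * c,
      moment N 3 = N%:R * c * (1 - 2 * q)
    & moment N 4 = 3 * c ^+ 2 * N%:R ^+ 2 + N%:R * c * (1 - 6 * c)].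
Proof.
elim: N => [|N [m0 m1 m2 m3 m4]].
  rewrite !bexpect_ord0 /ccount (@eq_card0 _ [set n | _]) => [|[]//].
  by rewrite /c; split; ring.
rewrite !bexpect_ccount_cons !bexpect_exprDn !big_ord_recr !big_ord0 /= !binE /=.
by rewrite m0 m1 m2 m3 m4 /c; split; ring.
Qed.

Lemma bprobC N (E : pred {ffun 'I_N -> bool}) : bprob (predC E) = 1 - bprob E.
Proof.
rewrite -(bexpect1 N) /bprob -bexpectN -bexpectD.
by apply: eq_bexpect => v /=; case: (E v); rewrite /= ?subrr ?subr0.
Qed.

Hypothesis q01 : 0 <= q <= 1.

Lemma bexpect_ge0 N (F : {ffun 'I_N -> bool} -> R) :
  (forall v, 0 <= F v) -> 0 <= bexpect F.
Proof.
case/andP: q01 => q0 q1 F0; apply: sumr_ge0 => v _; rewrite mulr_ge0 //.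
by apply: prodr_ge0 => n _; rewrite /bern; case: (v n); rewrite ?subr_ge0.
Qed.

Lemma ler_bexpect N (F G : {ffun 'I_N -> bool} -> R) :
  (forall v, F v <= G v) -> bexpect F <= bexpect G.
Proof.
move=> FG; rewrite -subr_ge0 -bexpectN -bexpectD.
by apply: bexpect_ge0 => v; rewrite subr_ge0.
Qed.

Lemma bprob_ge0 N (E : pred {ffun 'I_N -> bool}) : 0 <= bprob E.
Proof. exact: bexpect_ge0. Qed.

Lemma bprob_le1 N (E : pred {ffun 'I_N -> bool}) : bprob E <= 1.
Proof. by rewrite -subr_ge0 -bprobC bprob_ge0. Qed.

Lemma le_bprob N (E E' : pred {ffun 'I_N -> bool}) :
  (forall v, E v -> E' v) -> bprob E <= bprob E'.
Proof.
move=> EE'; apply: ler_bexpect => v.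
by case: (boolP (E v)) => [/EE' ->|_] //=; rewrite ler0n.
Qed.

Lemma markov_bprob N (G : {ffun 'I_N -> bool} -> R) (E : pred {ffun 'I_N -> bool}) a :
  (forall v, 0 <= G v) -> (forall v, E v -> a <= G v) -> a * bprob E <= bexpect G.
Proof.
move=> G0 EG; rewrite -bexpectZ; apply: ler_bexpect => v.
by case: (boolP (E v)) => [/EG|_]; rewrite ?mulr1 ?mulr0.
Qed.

Lemma ccount_chebyshev N (E : pred {ffun 'I_N -> bool}) t : 0 <= t ->
  (forall v, E v -> t <= `|ccount v|) -> t ^+ 2 * bprob E <= N%:R * (q * (1 - q)).
Proof.
move=> t0 Efar; have [_ _ <- _ _] := ccount_moments N.
apply: markov_bprob => [v|v /Efar tY]; first exact: sqr_ge0.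
by rewrite -[ccount v ^+ 2]real_normK ?num_real // lerXn2r ?nnegrE.
Qed.

Lemma quartic_le_indicator_lt0 (s y : R) : 0 < s ->
  s ^+ 2 * y ^+ 2 - y ^+ 4 / 8 - 2 * s ^+ 3 * y <= 7 * s ^+ 4 * (y < 0)%R%:R.
Proof.
move=> s0; have s0' := ltW s0.
case: (ltP y 0) => hy /=; rewrite ?mulr1 ?mulr0.
  have k1 := sqr_ge0 (y ^+ 2 - 6 * s ^+ 2).
  have k2 := mulr_ge0 (sqr_ge0 s) (sqr_ge0 (y + 2 * s)).
  have k3 := exprn_ge0 4 s0'.
  nra.
have k1 := mulr_ge0 (sqr_ge0 y) (sqr_ge0 (y - 2 * s)).
have k2 := mulr_ge0 (mulr_ge0 hy s0') (sqr_ge0 (2 * y - 3 * s)).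
have k3 := mulr_ge0 hy (exprn_ge0 3 s0').
nra.
Qed.

Lemma anticoncentration N (G : {ffun 'I_N -> bool} -> R) s : 0 < s ->
  bexpect G = 0 -> bexpect (fun v => G v ^+ 2) = s ^+ 2 ->
  bexpect (fun v => G v ^+ 4) <= 4 * s ^+ 4 ->
  1 / 14 <= bprob (fun v => G v < 0).
Proof.
move=> s0 m1 m2 m4.
have := ler_bexpect (fun v => quartic_le_indicator_lt0 (G v) s0).
have -> : bexpect (fun v => s ^+ 2 * G v ^+ 2 - G v ^+ 4 / 8 - 2 * s ^+ 3 * G v)
    = s ^+ 2 * s ^+ 2 - bexpect (fun v => G v ^+ 4) / 8.
  rewrite -m2 -[_ / 8]mulrC -[_ - _](subr0) -[0](mulr0 (2 * s ^+ 3)) -m1.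
  by rewrite -!bexpectZ -!bexpectN -!bexpectD; apply: eq_bexpect => v; ring.
have s22 : s ^+ 2 * s ^+ 2 = s ^+ 4 by rewrite -exprD.
have s4 : 0 < s ^+ 4 by rewrite exprn_gt0.
rewrite bexpectZ s22 -(ler_pM2l s4) /bprob => h; lra.
Qed.

End BernoulliProduct.

(* Not opened earlier: it would reparse the finset [set n | v n] in ccount. *)
Local Open Scope classical_set_scope.

Lemma inv_natr_cvg0 (R : realType) : (fun N : nat => (N%:R : R)^-1) @ \oo --> (0 : R).
Proof.
apply/gtr0_cvgV0; last exact: cvgr_idn.
by near=> N; rewrite ltr0n; near: N; exact: nbhs_infty_gt.
Unshelve. all: by end_near. Qed.

Lemma nbhs_infty_natrM_ge1 (R : realType) (c : R) : 0 < c ->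
  \forall N \near \oo, 1 <= N%:R * c.
Proof.
move=> c0; near=> N; rewrite -ler_pdivrMr //; near: N; exact: nbhs_infty_ger.
Unshelve. all: by end_near. Qed.

Section BinomialTails.
Variables (R : realType) (q : R).
Hypothesis q01 : 0 <= q <= 1.

Lemma bprob_ccount_far_cvg0 d (E : forall N, pred {ffun 'I_N -> bool}) : 0 < d ->
  (forall N v, E N v -> N%:R * d <= `|ccount q v|) ->
  (fun N => bprob q (E N)) @ \oo --> (0 : R).
Proof.
move=> d0 Efar; set c := q * (1 - q).
have tail N : (0 < N)%N -> bprob q (E N) <= c / d ^+ 2 * N%:R^-1.
  move=> N0; have Nd0 : 0 < N%:R * d by rewrite mulr_gt0 ?ltr0n.
  rewrite -(ler_pM2l (exprn_gt0 2 Nd0)).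
  apply: le_trans (ccount_chebyshev q01 (ltW Nd0) (Efar N)) _.
  rewrite [leRHS](_ : _ = N%:R * c) //.
  by field; rewrite pnatr_eq0 -lt0n N0 gt_eqF.
apply: (@squeeze_cvgr _ _ _ _ (fun=> 0) (fun N => c / d ^+ 2 * N%:R^-1)).
- near=> N; rewrite bprob_ge0 ?tail //; near: N; exact: nbhs_infty_gt.
- exact: cvg_cst.
- by rewrite -(mulr0 (c / d ^+ 2)); apply: cvgMr; exact: inv_natr_cvg0.
Unshelve. all: by end_near. Qed.

Lemma ccount_anticoncentration N : 1 <= N%:R * (q * (1 - q)) ->
  1 / 14 <= bprob q (fun v : {ffun 'I_N -> bool} => ccount q v < 0) /\
  1 / 14 <= bprob q (fun v : {ffun 'I_N -> bool} => 0 <= ccount q v).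
Proof.
set S := N%:R * _ => S1; have [_ m1 m2 _ m4] := ccount_moments q N.
have c0 : 0 <= q * (1 - q) by case/andP: q01 => q0 q1; rewrite mulr_ge0 ?subr_ge0.
have sqrtS : Num.sqrt S ^+ 2 = S by rewrite sqr_sqrtr // (le_trans ler01).
have m4S : bexpect q (fun v : {ffun 'I_N -> bool} => ccount q v ^+ 4) <= 4 * Num.sqrt S ^+ 4.
  rewrite m4 (_ : _ ^+ 4 = S ^+ 2); last by rewrite -[in RHS]sqrtS -exprM.
  have SS : S <= S ^+ 2 by rewrite expr2 ler_peMl // (le_trans ler01).
  have Sc : 0 <= S * (q * (1 - q)) by rewrite mulr_ge0 // (le_trans ler01).
  rewrite (_ : _ + _ = 3 * S ^+ 2 + S * (1 - 6 * (q * (1 - q)))); last by rewrite /S; ring.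
  lra.
have s0 : 0 < Num.sqrt S by rewrite sqrtr_gt0 (lt_le_trans ltr01).
split.
  by apply: anticoncentration s0 _ _ m4S => //; rewrite sqrtS m2.
have negY : forall v : {ffun 'I_N -> bool}, - ccount q v < 0 -> 0 <= ccount q v.
  by move=> v; rewrite oppr_lt0 => /ltW.
apply: le_trans (le_bprob q01 negY); apply: anticoncentration s0 _ _ _ => //.
- by rewrite bexpectN m1 oppr0.
- by rewrite sqrtS /S -m2; apply: eq_bexpect => v; rewrite sqrrN.
- by under eq_bexpect do rewrite -[4%N]/(2 * 2)%N exprM sqrrN -exprM.
Qed.

End BinomialTails.

Section Voting.
Variable R : realType.

Definition vote_prob (p : R) (sigma : R * R) : R := p * sigma.2 + (1 - p) * sigma.1.

Lemma vote_prob_in01 p sigma : 0 <= p <= 1 ->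
  0 <= sigma.1 <= 1 -> 0 <= sigma.2 <= 1 -> 0 <= vote_prob p sigma <= 1.
Proof. by rewrite /vote_prob => /andP[? ?] /andP[? ?] /andP[? ?]; apply/andP; split; nra. Qed.

Lemma sum_sym_profile_bprob pH pL N sigma w (P : pred {ffun 'I_N -> bool}) :
  \sum_(s : {ffun 'I_N -> bool}) \sum_(v : {ffun 'I_N -> bool} | P v)
     \prod_(n < N) (Psig pH pL w (s n) * Pvote (@sym_profile R N sigma n) (s n) (v n))
  = bprob (vote_prob (if w then pH else pL) sigma) P.
Proof.
rewrite exchange_big big_mkcond /=; apply: eq_bigr => v _.
case: (P v); rewrite ?mulr1 ?mulr0 //.
rewrite -(bigA_distr_bigA (fun n b => Psig pH pL w b * Pvote sigma b (v n))).
apply: eq_bigr => n _; rewrite big_bool /Psig /Pvote /bern /vote_prob.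
by case: (v n); case: w => /=; ring.
Qed.

Definition win_prob (mu q : R) N : R := bprob q (@A_wins R mu N).

Lemma fidelity_sym (prH pH pL mu : R) N sigma :
  fidelity prH pH pL mu (@sym_profile R N sigma)
  = (1 - prH) * (1 - win_prob mu (vote_prob pL sigma) N)
    + prH * win_prob mu (vote_prob pH sigma) N.
Proof. by rewrite /fidelity /lambdaR /lambdaA !sum_sym_profile_bprob -bprobC. Qed.

Lemma A_wins_ccount (mu q : R) N (v : {ffun 'I_N -> bool}) :
  A_wins mu v = (N%:R * (mu - q) <= ccount q v).
Proof. by rewrite /A_wins /ccount lerBrDr mulrBr subrK mulrC. Qed.

Lemma win_prob_cvg0 (mu q : R) : 0 <= q <= 1 -> q < mu -> win_prob mu q @ \oo --> (0 : R).
Proof.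
move=> q01 qmu; apply: (bprob_ccount_far_cvg0 q01 (d := mu - q)); first by rewrite subr_gt0.
by move=> N v; rewrite (A_wins_ccount _ q) => /le_trans; apply; exact: ler_norm.
Qed.

Lemma win_prob_cvg1 (mu q : R) : 0 <= q <= 1 -> mu < q -> win_prob mu q @ \oo --> (1 : R).
Proof.
move=> q01 muq.
have lose0 : (fun N => bprob q (predC (@A_wins R mu N))) @ \oo --> (0 : R).
  apply: (bprob_ccount_far_cvg0 q01 (d := q - mu)); first by rewrite subr_gt0.
  move=> N v /=; rewrite (A_wins_ccount _ q) -ltNge => Ylt.
  by rewrite -normrN; apply: le_trans (ler_norm _); lra.
have -> : win_prob mu q = fun N => 1 - bprob q (predC (@A_wins R mu N)).
  by apply/funext => N; rewrite bprobC subKr.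
by rewrite -[X in _ --> X](subr0 1); exact: cvgB (cvg_cst _) lose0.
Qed.

Lemma win_prob_le_eventually (mu q : R) : 0 < mu < 1 -> 0 <= q <= mu ->
  \forall N \near \oo, win_prob mu q N <= 13 / 14.
Proof.
move=> /andP[mu0 mu1] /andP[q0 qmu].
have q01 : 0 <= q <= 1 by rewrite q0 (le_trans qmu) ?ltW.
move: qmu; rewrite le_eqVlt => /orP[/eqP qmu | qltmu]; last first.
  by apply: cvgr_le (win_prob_cvg0 q01 qltmu) _ _; lra.
subst mu; near=> N.
have Nc : 1 <= N%:R * (q * (1 - q)).
  by near: N; apply: nbhs_infty_natrM_ge1; rewrite mulr_gt0 ?subr_gt0.
have [Ylt0 _] := ccount_anticoncentration q01 Nc.
have : 1 / 14 <= bprob q (predC (@A_wins R q N)).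
  apply: le_trans Ylt0 (le_bprob q01 _) => v /=.
  by rewrite (A_wins_ccount _ q) subrr mulr0 -ltNge.
by rewrite bprobC /win_prob; lra.
Unshelve. all: by end_near. Qed.

Lemma win_prob_ge_eventually (mu q : R) : 0 < mu < 1 -> mu <= q <= 1 ->
  \forall N \near \oo, 1 / 14 <= win_prob mu q N.
Proof.
move=> /andP[mu0 mu1] /andP[muq q1].
have q01 : 0 <= q <= 1 by rewrite q1 (le_trans (ltW mu0)).
move: muq; rewrite le_eqVlt => /orP[/eqP muq | multq]; last first.
  by apply: cvgr_ge (win_prob_cvg1 q01 multq) _ _; lra.
subst mu; near=> N.
have Nc : 1 <= N%:R * (q * (1 - q)).
  by near: N; apply: nbhs_infty_natrM_ge1; rewrite mulr_gt0 ?subr_gt0.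
have [_ Yge0] := ccount_anticoncentration q01 Nc.
apply: le_trans Yge0 (le_bprob q01 _) => v /=.
by rewrite (A_wins_ccount _ q) subrr mulr0.
Unshelve. all: by end_near. Qed.

End Voting.

Section SymmetricFidelity.
Variables (R : realType) (prH pH pL mu : R) (sigma : R * R).
Hypotheses (hprH : 0 < prH < 1) (hmu : 0 < mu < 1).
Let qH := vote_prob pH sigma.
Let qL := vote_prob pL sigma.
Hypotheses (qH01 : 0 <= qH <= 1) (qL01 : 0 <= qL <= 1).
Let A N := fidelity prH pH pL mu (@sym_profile R N sigma).

Lemma fidelity_sym_cvg1 : qL < mu < qH -> A @ \oo --> (1 : R).
Proof.
case/andP=> qLmu muqH.
have -> : A = fun N => (1 - prH) * (1 - win_prob mu qL N) + prH * win_prob mu qH N.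
  by apply/funext => N; exact: fidelity_sym.
rewrite -[X in _ --> X](_ : (1 - prH) * (1 - 0) + prH * 1 = 1); last by ring.
apply: cvgD; apply: cvgMr; last exact: win_prob_cvg1.
by apply: cvgB; [exact: cvg_cst | exact: win_prob_cvg0].
Qed.

Lemma fidelity_sym_le_eventually : qH <= mu \/ mu <= qL ->
  exists2 eps : R, 0 < eps & \forall N \near \oo, A N <= 1 - eps.
Proof.
case/andP: hprH => pr0 pr1; case=> [qHmu | muqL].
  exists (prH / 14); first by rewrite divr_gt0.
  have qHmu' : 0 <= qH <= mu by case/andP: qH01 => -> _.
  apply: filterS (win_prob_le_eventually hmu qHmu') => N wH.
  have wL0 : 0 <= win_prob mu qL N := bprob_ge0 qL01 _.
  by rewrite /A fidelity_sym; nra.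
exists ((1 - prH) / 14); first by rewrite divr_gt0 ?subr_gt0.
have muqL' : mu <= qL <= 1 by case/andP: qL01 => _ ->; rewrite muqL.
apply: filterS (win_prob_ge_eventually hmu muqL') => N wL.
have wH1 : win_prob mu qH N <= 1 := bprob_le1 qH01 _.
by rewrite /A fidelity_sym; nra.
Qed.

End SymmetricFidelity.

Theorem corollary2 (R : realType)
  (prH : R) (pH pL : R) (mu : R) (alphaF alphaU : R) (sigma : R * R)
  (hprH : 0 < prH < 1)
  (hpH : 0 <= pH <= 1) (hpL : 0 <= pL <= 1) (hsig : pL < pH)
  (hmu : 0 < mu < 1)
  (haF : 0 <= alphaF) (haU : 0 <= alphaU) (haFU : alphaF + alphaU <= 1)
  (haFmu : alphaF < mu) (haUmu : alphaU < 1 - mu)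
  (hbl : 0 <= sigma.1 <= 1) (hbh : 0 <= sigma.2 <= 1) :
  let f := Num.min (fH pH mu sigma) (fL pL mu sigma) in
  let A := fun N : nat => fidelity prH pH pL mu (@sym_profile R N sigma) in
  (0 < f -> A @ \oo --> (1 : R)) /\
  (f <= 0 -> ~ (A @ \oo --> (1 : R))).
Proof.
move=> f A.
have qH01 := vote_prob_in01 hpH hbl hbh; have qL01 := vote_prob_in01 hpL hbl hbh.
have fHE : fH pH mu sigma = vote_prob pH sigma - mu by rewrite /fH /vote_prob; ring.
have fLE : fL pL mu sigma = mu - vote_prob pL sigma by rewrite /fL /vote_prob; ring.
rewrite /f fHE fLE; split.
  by rewrite lt_min !subr_gt0 andbC; exact: fidelity_sym_cvg1.
rewrite ge_min !subr_le0 => /orP/(fidelity_sym_le_eventually hprH hmu qH01 qL01).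
by case=> eps eps0 Aeps /cvgr_to_le; move/(_ _ Aeps); lra.
Qed.
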